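(* There is an absolute constant $C_5$ such that the following holds for all $p\in(0,0.1)$. Let $R_1,\dots,R_{n+1}$ be a good sequence of rectangles with $\dim(R_1)=(a_1,b_1)$, let $a_0=b_0:=A$, $s_0:=a_1-a_0$, $t_0:=b_1-b_0$. Then $$\mathbb{P}_p\big[G(R_1)\big]\le \exp\big[-s_0\,g(b_0q)-t_0\,g(a_0q)+C_5q^{-1/2}\log q^{-1}\big].$$
   Context: $q=-\log(1-p)$, $A=\lceil 1/\sqrt q\rceil$, $B=\lfloor q^{-1}\log q^{-1}\rfloor$; $\beta(u)=\frac{u+\sqrt{u(4-3u)}}{2}$, $g(z)=-\log\beta(1-e^{-z})$. Under $\mathbb{P}_p$ the initial configuration assigns independent states to sites of $\mathbb{Z}^2$: the origin is active with probability $p$, else empty; every other site is occupied with probability $p$, else empty. A rectangle is $\{a,\dots,c\}\times\{b,\dots,d\}\subset\mathbb{Z}^2$ with dimensions $(c-a+1,d-b+1)$; columns are $\{x\}\times\{b,\dots,d\}$, rows $\{a,\dots,c\}\times\{y\}$. A double gap in the columns (rows) is a pair of consecutive columns (rows) consisting entirely of initially empty sites; $G(R)$ is the event that $R$ has no double gap in the columns or rows. A sequence of rectangles $R_1,\dots,R_{n+1}$ ($n\ge1$) with $\dim(R_i)=(a_i,b_i)$, $s_i=a_{i+1}-a_i$, $t_i=b_{i+1}-b_i$ is good if: (i) $0\in R_1\subseteq\dots\subseteq R_{n+1}$; (ii) $\min(a_1,b_1)\in[A,A+3]$; (iii) $a_n+b_n\le B$; (iv) $a_{n+1}+b_{n+1}>B$;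 (v) for $i=1,\dots,n$, $s_i\ge a_i\sqrt q$ or $t_i\ge b_i\sqrt q$; (vi) for $i=1,\dots,n$, $s_i<a_i\sqrt q+4$ and $t_i<b_i\sqrt q+4$. *)

From HB Require Import structures.
From mathcomp Require Import all_boot all_order all_algebra.
From mathcomp Require Import all_classical all_reals all_analysis.
Set Implicit Arguments. Unset Strict Implicit. Unset Printing Implicit Defensive.
Import Order.TTheory GRing.Theory Num.Theory.
Local Open Scope ring_scope.

Section Defs.
Variable R : realType.

Definition qp (p : R) : R := - ln (1 - p).
Definition Aint (p : R) : int := Num.ceil (1 / Num.sqrt (qp p)).
Definition Bint (p : R) : int := Num.floor ((qp p)^-1 * ln ((qp p)^-1)).

Definition beta (u : R) : R := (u + Num.sqrt (u * (4 - 3 * u))) / 2.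
Definition gfun (z : R) : R := - ln (beta (1 - expR (- z))).

Record rect := Rect { rx0 : int; ry0 : int; rx1 : int; ry1 : int }.
Definition in_rect (r : rect) (x y : int) : Prop :=
  (rx0 r <= x <= rx1 r) /\ (ry0 r <= y <= ry1 r).
Definition subrect (r1 r2 : rect) : Prop :=
  forall x y, in_rect r1 x y -> in_rect r2 x y.
Definition dima (r : rect) : int := rx1 r - rx0 r + 1.
Definition dimb (r : rect) : int := ry1 r - ry0 r + 1.

(* good sequence R_1, ..., R_{n+1} (indices 1..n+1 of Rs) *)
Definition good (p : R) (n : nat) (Rs : nat -> rect) : Prop :=
  let sq := Num.sqrt (qp p) in
  let a i := dima (Rs i) in
  let b i := dimb (Rs i) in
  (1 <= n)%N /\
  in_rect (Rs 1%N) 0 0 /\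
  (forall i, (1 <= i <= n)%N -> subrect (Rs i) (Rs i.+1)) /\
  (Aint p <= Num.min (a 1%N) (b 1%N) <= Aint p + 3) /\
  (a n + b n <= Bint p) /\
  (a n.+1 + b n.+1 > Bint p) /\
  (forall i, (1 <= i <= n)%N ->
     ((a i)%:~R * sq <= (a i.+1 - a i)%:~R) \/ ((b i)%:~R * sq <= (b i.+1 - b i)%:~R)) /\
  (forall i, (1 <= i <= n)%N ->
     ((a i.+1 - a i)%:~R < (a i)%:~R * sq + 4) /\ ((b i.+1 - b i)%:~R < (b i)%:~R * sq + 4)).

(* Configurations of the w x h sites of a rectangle (site (i,j) is the site
   (x0+i, y0+j)); true = initially non-empty (occupied, or active for the
   origin), which has probability p independently at every site. *)
Definition config (w h : nat) := {ffun 'I_w * 'I_h -> bool}.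

Definition col_empty w h (om : config w h) (x : nat) : bool :=
  [forall k : 'I_w * 'I_h, (k.1 == x :> nat) ==> ~~ om k].
Definition row_empty w h (om : config w h) (y : nat) : bool :=
  [forall k : 'I_w * 'I_h, (k.2 == y :> nat) ==> ~~ om k].

Definition double_gap_cols w h (om : config w h) : bool :=
  [exists i : 'I_w, (i.+1 < w)%N && col_empty om i && col_empty om i.+1].
Definition double_gap_rows w h (om : config w h) : bool :=
  [exists j : 'I_h, (j.+1 < h)%N && row_empty om j && row_empty om j.+1].

Definition Gev w h (om : config w h) : bool :=
  ~~ double_gap_cols om && ~~ double_gap_rows om.

Definition probG (p : R) (w h : nat) : R :=
  \sum_(om : config w h | Gev om) \prod_(k : 'I_w * 'I_h) (if om k then p else 1 - p).

Definition probG_rect (p : R) (r : rect) : R :=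
  probG p `|dima r|%N `|dimb r|%N.

End Defs.

From HB Require Import structures.
From mathcomp Require Import all_boot all_order all_algebra.
From mathcomp Require Import all_classical all_reals all_analysis.
From mathcomp Require Import ring lra zify.
Set Implicit Arguments. Unset Strict Implicit. Unset Printing Implicit Defensive.
Import Order.TTheory GRing.Theory Num.Theory.
Local Open Scope ring_scope.

(** If [R] has dimensions [(w, h)], then [G(R)] forbids two consecutive empty
    rows.  Rows are independent and each is empty with probability
    [x = (1 - p) ^ w], so [P_p[G(R)]] is at most the probability [D_h] that [h]
    independent Bernoulli([x]) bits have no two consecutive ones.  This obeys a
    second-order linear recursion whose characteristic root is
    [beta (1 - x)], whence [P_p[G(R)] <= beta (1 - x) ^ (h - 1)].  For a good
    sequence, the short side of [R_1] is [A + O(1)] and the long side at most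
    [B]; then [beta (1 - x) = beta (1 - e^(-Aq)) (1 + O(sqrt q))] and
    [0 <= g(Aq) <= 2 log q^-1], which yields the bound with [C5 = 40]. *)

Section Bounds.
Variable R : realType.

Definition pbit (p : R) (b : bool) : R := if b then p else 1 - p.

Lemma pbit_ge0 (p : R) b : 0 <= p <= 1 -> 0 <= pbit p b.
Proof. by case/andP=> p0 p1; case: b; rewrite /pbit ?subr_ge0. Qed.

Lemma sum_pbit_ffun (p : R) n :
  \sum_(r : {ffun 'I_n -> bool}) \prod_i pbit p (r i) = 1.
Proof.
rewrite -(bigA_distr_bigA (fun _ => pbit p)) /=.
by rewrite big1 // => i _; rewrite big_bool /= /pbit addrC subrK.
Qed.

Lemma prod_nat_forall (I : finType) (P : pred I) :
  \prod_i ((P i)%:R : R) = [forall i, P i]%:R.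
Proof.
case: (boolP [forall i, P i]) => [/forallP allP | /forallPn[i /negbTE Pi]].
  by rewrite big1 // => i _; rewrite allP.
by rewrite (bigD1 i) //= Pi mul0r.
Qed.

Lemma sum_pbit_empty (p : R) n (b : bool) :
  \sum_(r : {ffun 'I_n -> bool}) ([forall i, ~~ r i] == b)%:R * \prod_i pbit p (r i)
  = pbit ((1 - p) ^+ n) b.
Proof.
have empty_mass : \sum_(r : {ffun 'I_n -> bool})
    [forall i, ~~ r i]%:R * \prod_i pbit p (r i) = (1 - p) ^+ n.
  under eq_bigr => r _ do rewrite -prod_nat_forall -big_split /=.
  rewrite -(bigA_distr_bigA (fun _ b => (~~ b)%:R * pbit p b)) /=.
  by rewrite prodr_const card_ord big_bool /= mul0r add0r mul1r.
case: b => /=; first by under eq_bigr => r _ do rewrite eqb_id.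
have -> : 1 - (1 - p) ^+ n = \sum_(r : {ffun 'I_n -> bool}) \prod_i pbit p (r i)
    - \sum_(r : {ffun 'I_n -> bool}) [forall i, ~~ r i]%:R * \prod_i pbit p (r i).
  by rewrite sum_pbit_ffun empty_mass.
rewrite -sumrB; apply: eq_bigr => r _.
by case: [forall i, ~~ r i]; rewrite /= ?mul1r ?mul0r ?subrr ?subr0.
Qed.

Definition cfg_tr w h (om : config w h) : config h w := [ffun k => om (k.2, k.1)].

Lemma cfg_trK w h : cancel (@cfg_tr w h) (@cfg_tr h w).
Proof. by move=> om; apply/ffunP => -[i j]; rewrite !ffunE. Qed.

Lemma col_empty_tr w h (om : config w h) x : col_empty (cfg_tr om) x = row_empty om x.
Proof.
rewrite /col_empty /row_empty.
by apply/forallP/forallP => H [i j]; have := H (j, i); rewrite ffunE.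
Qed.

Lemma row_empty_tr w h (om : config w h) y : row_empty (cfg_tr om) y = col_empty om y.
Proof.
rewrite /col_empty /row_empty.
by apply/forallP/forallP => H [i j]; have := H (j, i); rewrite ffunE.
Qed.

Lemma Gev_tr w h (om : config w h) : Gev (cfg_tr om) = Gev om.
Proof.
rewrite /Gev /double_gap_cols /double_gap_rows andbC.
by congr (~~ _ && ~~ _); apply: eq_existsb => i; rewrite ?col_empty_tr ?row_empty_tr.
Qed.

Lemma probGC (p : R) w h : probG p w h = probG p h w.
Proof.
rewrite /probG (reindex (@cfg_tr h w)) /=; last by exists (@cfg_tr w h) => om _; rewrite cfg_trK.
apply: eq_big => [om | om _]; first by rewrite Gev_tr.
rewrite (reindex (fun k : 'I_w * 'I_h => (k.2, k.1))) /=;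
  last by exists (fun k => (k.2, k.1)) => -[].
by apply: eq_bigr => -[i j] _; rewrite ffunE.
Qed.

Definition cfg_rows w h (om : config w h) : {ffun 'I_h -> {ffun 'I_w -> bool}} :=
  [ffun j => [ffun i => om (i, j)]].
Definition rows_cfg w h (f : {ffun 'I_h -> {ffun 'I_w -> bool}}) : config w h :=
  [ffun k => f k.2 k.1].

Lemma rows_cfgK w h : cancel (@rows_cfg w h) (@cfg_rows w h).
Proof. by move=> f; apply/ffunP => j; apply/ffunP => i; rewrite !ffunE. Qed.

Lemma cfg_rowsK w h : cancel (@cfg_rows w h) (@rows_cfg w h).
Proof. by move=> om; apply/ffunP => -[i j]; rewrite !ffunE. Qed.

Definition empty_rows w h (f : {ffun 'I_h -> {ffun 'I_w -> bool}}) : {ffun 'I_h -> bool} :=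
  [ffun j => [forall i, ~~ f j i]].

(** [bit_at s y] is the [y]-th entry of [s], read as [false] out of range. *)
Definition bit_at h (s : {ffun 'I_h -> bool}) (y : nat) : bool :=
  [exists j : 'I_h, (j == y :> nat) && s j].

Definition adj_true h (s : {ffun 'I_h -> bool}) : bool :=
  [exists j : 'I_h, s j && bit_at s j.+1].

Lemma bit_at_ord h (s : {ffun 'I_h -> bool}) (j : 'I_h) : bit_at s j = s j.
Proof.
apply/existsP/idP => [[j' /andP[/eqP e]]|sj]; last by exists j; rewrite eqxx.
by have -> : j = j' by apply/val_inj.
Qed.

Lemma row_empty_rows w h (f : {ffun 'I_h -> {ffun 'I_w -> bool}}) (j : 'I_h) :
  row_empty (rows_cfg f) j = empty_rows f j.
Proof.
rewrite ffunE; apply/forallP/forallP => H => [i | [i j'] /=].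
  by have := H (i, j); rewrite ffunE /= eqxx.
rewrite ffunE; apply/implyP => /eqP e.
by have -> : j' = j by apply/val_inj.
Qed.

Lemma double_gap_rows_cfg w h (f : {ffun 'I_h -> {ffun 'I_w -> bool}}) :
  double_gap_rows (rows_cfg f) = adj_true (empty_rows f).
Proof.
apply/existsP/existsP => -[j].
  case/andP=> /andP[hj gj] gj1; exists j; rewrite -row_empty_rows gj /=.
  by apply/existsP; exists (Ordinal hj); rewrite eqxx -row_empty_rows.
rewrite -row_empty_rows => /andP[gj /existsP[j1 /andP[/eqP e gj1]]]; exists j.
have hj : (j.+1 < h)%N by rewrite -e ltn_ord.
rewrite hj gj /= -[j.+1]/(nat_of_ord (Ordinal hj)) row_empty_rows.
by rewrite (_ : Ordinal hj = j1) //; apply/val_inj.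
Qed.

Lemma weight_rows_cfg (p : R) w h (f : {ffun 'I_h -> {ffun 'I_w -> bool}}) :
  \prod_(k : 'I_w * 'I_h) pbit p (rows_cfg f k) = \prod_j \prod_i pbit p (f j i).
Proof.
by rewrite exchange_big pair_big /=; apply: eq_bigr => -[i j] _; rewrite ffunE.
Qed.

Definition no_adj (x : R) h (c : bool) : R :=
  \sum_(s : {ffun 'I_h -> bool} | ~~ adj_true s && ~~ (c && bit_at s 0)) \prod_j pbit x (s j).

(** The rows are independent and each is empty with probability [(1 - p) ^+ w]. *)
Lemma no_row_gap_mass (p : R) w h :
  \sum_(om : config w h | ~~ double_gap_rows om) \prod_(k : 'I_w * 'I_h) pbit p (om k)
  = no_adj ((1 - p) ^+ w) h false.
Proof.
rewrite (reindex (@rows_cfg w h)) /=;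
  last by exists (@cfg_rows w h) => ? _; rewrite ?rows_cfgK ?cfg_rowsK.
under eq_bigl => f do rewrite double_gap_rows_cfg.
under eq_bigr => f _ do rewrite weight_rows_cfg.
rewrite (partition_big (@empty_rows w h) (fun s => ~~ adj_true s && ~~ (false && bit_at s 0))) /=;
  last by move=> f; rewrite andbT.
apply: eq_bigr => s; rewrite andbT => ns.
rewrite big_mkcond /=.
transitivity (\sum_(f : {ffun 'I_h -> {ffun 'I_w -> bool}})
   \prod_j (([forall i, ~~ f j i] == s j)%:R * \prod_i pbit p (f j i))).
  apply: eq_bigr => f _; rewrite big_split /=.
  have -> : \prod_j (([forall i, ~~ f j i] == s j)%:R : R) = (empty_rows f == s)%:R.
    rewrite prod_nat_forall; congr (nat_of_bool _)%:R; apply/idP/eqP => [/forallP H | <-].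
      by apply/ffunP => j; apply/eqP; rewrite ffunE H.
    by apply/forallP => j; rewrite ffunE.
  by case: eqP => [-> | _]; rewrite ?ns ?mul1r ?andbF ?mul0r.
rewrite -(bigA_distr_bigA (fun j (r : {ffun 'I_w -> bool}) =>
     ([forall i, ~~ r i] == s j)%:R * \prod_i pbit p (r i))) /=.
by apply: eq_bigr => j _; rewrite sum_pbit_empty.
Qed.

Lemma probG_le_no_adj (p : R) w h :
  0 <= p <= 1 -> probG p w h <= no_adj ((1 - p) ^+ w) h false.
Proof.
move=> p01; rewrite -no_row_gap_mass /probG.
rewrite [X in X <= _]big_mkcond [X in _ <= X]big_mkcond /=.
apply: ler_sum => om _; rewrite /Gev.
case: (double_gap_rows om); case: (double_gap_cols om) => //=.
by apply: prodr_ge0 => k _; apply: pbit_ge0.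
Qed.

Definition fcons h (b : bool) (t : {ffun 'I_h -> bool}) : {ffun 'I_h.+1 -> bool} :=
  [ffun i => if unlift ord0 i is Some j then t j else b].

Lemma fcons0 h b (t : {ffun 'I_h -> bool}) : fcons b t ord0 = b.
Proof. by rewrite ffunE unlift_none. Qed.

Lemma fconsS h b (t : {ffun 'I_h -> bool}) j : fcons b t (lift ord0 j) = t j.
Proof. by rewrite ffunE liftK. Qed.

Lemma bit_at_fcons0 h b (t : {ffun 'I_h -> bool}) : bit_at (fcons b t) 0 = b.
Proof. by rewrite -[0%N]/(nat_of_ord (@ord0 h)) bit_at_ord fcons0. Qed.

Lemma bit_at_fconsS h b (t : {ffun 'I_h -> bool}) y : bit_at (fcons b t) y.+1 = bit_at t y.
Proof.
apply/existsP/existsP => -[j /andP[/eqP e sj]].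
  case: (unliftP ord0 j) e sj => [j' -> | ->] //.
  by rewrite lift0 fconsS => -[e] sj; exists j'; rewrite e eqxx.
by exists (lift ord0 j); rewrite lift0 fconsS e eqxx.
Qed.

Lemma existsb_ordS n (P : pred 'I_n.+1) :
  [exists j, P j] = P ord0 || [exists j : 'I_n, P (lift ord0 j)].
Proof.
apply/existsP/orP => [[j] | [P0 | /existsP[j Pj]]]; last 2 first.
- by exists ord0.
- by exists (lift ord0 j).
by case: (unliftP ord0 j) => [j' -> | ->] Pj; [right; apply/existsP; exists j' | left].
Qed.

Lemma adj_true_fcons h b (t : {ffun 'I_h -> bool}) :
  adj_true (fcons b t) = (b && bit_at t 0) || adj_true t.
Proof.
rewrite /adj_true existsb_ordS fcons0 -[1%N]/(0.+1) bit_at_fconsS; congr (_ || _).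
by apply: eq_existsb => j; rewrite fconsS lift0 bit_at_fconsS.
Qed.

Lemma sum_bool_pair (T : finType) (F : bool * T -> R) :
  \sum_(bt : bool * T) F bt = \sum_t F (true, t) + \sum_t F (false, t).
Proof.
transitivity (\sum_(b : bool) \sum_(t : T) F (b, t)); last by rewrite big_bool.
by rewrite (pair_bigA _ (fun b t => F (b, t))); apply: eq_bigr => -[].
Qed.

Lemma no_adjS (x : R) h c :
  no_adj x h.+1 c = (1 - x) * no_adj x h false + (~~ c)%:R * x * no_adj x h true.
Proof.
rewrite /no_adj (reindex (fun bt : bool * {ffun 'I_h -> bool} => fcons bt.1 bt.2)) /=;
  last first.
  exists (fun s : {ffun 'I_h.+1 -> bool} => (s ord0, [ffun j => s (lift ord0 j)])).
    move=> [b t] _ /=; rewrite fcons0; congr (_, _); apply/ffunP => j.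
    by rewrite ffunE fconsS.
  move=> s _ /=; apply/ffunP => i; rewrite ffunE.
  by case: (unliftP ord0 i) => [j -> | ->]; rewrite ?ffunE.
rewrite big_mkcond sum_bool_pair /= !mulr_sumr addrC; congr (_ + _).
- rewrite [in RHS]big_mkcond /=; apply: eq_bigr => t _.
  rewrite adj_true_fcons bit_at_fcons0 big_ord_recl fcons0 /= andbF /=.
  under [in LHS]eq_bigr => j _ do rewrite fconsS.
  by case: ifP => _; rewrite ?mulr0.
- rewrite [in RHS]big_mkcond /=; apply: eq_bigr => t _.
  rewrite adj_true_fcons bit_at_fcons0 big_ord_recl fcons0 /= andbT.
  under [in LHS]eq_bigr => j _ do rewrite fconsS.
  case: c; rewrite /= ?andbF /= ?mul0r ?mulr0 ?mul1r //.
  + by case: ifP.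
  + by rewrite andbT negb_or andbC.
Qed.

Lemma no_adj0 (x : R) c : no_adj x 0 c = 1.
Proof.
rewrite /no_adj (eq_bigl (pred1 [ffun _ => false])); first by rewrite big_pred1_eq big_ord0.
move=> s /=.
have -> : s == [ffun _ => false] by apply/eqP/ffunP => -[].
have -> : adj_true s = false by apply/existsP => -[[]].
have -> : bit_at s 0 = false by apply/existsP => -[[]].
by rewrite andbF.
Qed.

(** By [no_adjS], [D_h := no_adj x h false] obeys
    [D_(h+2) = (1 - x) D_(h+1) + x (1 - x) D_h], and the hypothesis on [bt]
    says that [bt ^+ h] obeys it too. *)
Lemma no_adj_le (x bt : R) h : 0 <= x <= 1 -> 0 <= bt <= 1 ->
  bt ^+ 2 = (1 - x) * bt + x * (1 - x) -> bt * no_adj x h false <= bt ^+ h.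
Proof.
move=> /andP[x0 x1] /andP[bt0 bt1] btE.
have x'0 : 0 <= 1 - x by rewrite subr_ge0.
suff [] : bt * no_adj x h false <= bt ^+ h /\ bt * no_adj x h.+1 false <= bt ^+ h.+1 by [].
elim: h => [|h [IH1 IH2]].
  rewrite no_adjS !no_adj0 /= expr0 expr1 !mulr1 mul1r subrK.
  by rewrite mulr1.
split => //.
rewrite no_adjS /= mul1r (no_adjS x h true) /= !mul0r addr0.
have -> : bt ^+ h.+2 = (1 - x) * bt ^+ h.+1 + x * (1 - x) * bt ^+ h.
  by rewrite !exprS mulrA -expr2 btE mulrDl -!mulrA.
have := ler_wpM2l x'0 IH2; have := ler_wpM2l (mulr_ge0 x0 x'0) IH1.
nra.
Qed.

Lemma beta_spec (u : R) : 0 <= u <= 1 ->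
  [/\ u <= beta u, beta u <= 1 & beta u ^+ 2 = u * beta u + (1 - u) * u].
Proof.
move=> /andP[u0 u1].
have v0 : 0 <= u * (4 - 3 * u) by apply: mulr_ge0 => //; lra.
set r := Num.sqrt (u * (4 - 3 * u)); have r0 : 0 <= r by apply: sqrtr_ge0.
have rr : r * r = u * (4 - 3 * u) by rewrite -expr2 sqr_sqrtr.
rewrite /beta -/r; split.
- suff : u <= r by lra.
  nra.
- suff : r <= 2 - u by lra.
  nra.
- apply/eqP; rewrite -subr_eq0.
  have -> : ((u + r) / 2) ^+ 2 - (u * ((u + r) / 2) + (1 - u) * u)
          = (r * r - u * (4 - 3 * u)) / 4 by field.
  by rewrite rr subrr mul0r.
Qed.

Lemma probG_le_beta (p : R) w h : 0 < p < 1 -> (0 < w)%N -> (0 < h)%N ->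
  probG p w h <= beta (1 - (1 - p) ^+ w) ^+ h.-1.
Proof.
move=> /andP[p0 p1] w0 h0.
set x := (1 - p) ^+ w.
have x0 : 0 <= x by rewrite exprn_ge0 // subr_ge0 ltW.
have x1 : x < 1 by rewrite exprn_ilt1 -?lt0n //; lra.
have x01 : 0 <= x <= 1 by rewrite x0 ltW.
have [] := @beta_spec (1 - x); first by rewrite subr_ge0 ltW // gerBl.
set bt := beta _ => btge bt1 btE.
have bt0 : 0 < bt by apply: lt_le_trans btge; rewrite subr_gt0.
have bt01 : 0 <= bt <= 1 by rewrite ltW.
have btE' : bt ^+ 2 = (1 - x) * bt + x * (1 - x) by rewrite btE; ring.
rewrite -(ler_pM2l bt0) -exprS prednK //.
apply: le_trans (no_adj_le h x01 bt01 btE').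
by rewrite ler_pM2l // probG_le_no_adj // !ltW.
Qed.

Lemma beta_le_near (u v s : R) : 0 < s -> s / 2 <= u -> u <= v -> v <= 1 ->
  v - u <= 3 * s ^+ 2 -> beta v <= beta u * (1 + 30 * s).
Proof.
move=> s0 hu huv hv1 hd.
have u0 : 0 < u by lra.
have vu0 : 0 <= u * (4 - 3 * u) by apply: mulr_ge0; lra.
have vv0 : 0 <= v * (4 - 3 * v) by apply: mulr_ge0; lra.
set ru := Num.sqrt (u * (4 - 3 * u)).
set rv := Num.sqrt (v * (4 - 3 * v)).
have ru0 : 0 <= ru by apply: sqrtr_ge0.
have rv0 : 0 <= rv by apply: sqrtr_ge0.
have ruE : ru * ru = u * (4 - 3 * u) by rewrite -expr2 sqr_sqrtr.
have rvE : rv * rv = v * (4 - 3 * v) by rewrite -expr2 sqr_sqrtr.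
have u_le : u <= u * (4 - 3 * u) by nra.
have ru_gt0 : 0 < ru.
  rewrite lt_neqAle ru0 andbT; apply/eqP => ru_eq0.
  by move: ruE; rewrite -ru_eq0 mulr0; lra.
(* (rv - ru)(rv + ru) = rv^2 - ru^2 <= 4 (v - u) *)
have diff_r : (rv - ru) * ru <= 4 * (v - u).
  case: (leP rv ru) => hr.
    have : (rv - ru) * ru <= 0 by apply: mulr_le0_ge0; lra.
    lra.
  have : (rv - ru) * ru <= (rv - ru) * (rv + ru) by apply: ler_wpM2l; lra.
  have -> : (rv - ru) * (rv + ru) = rv * rv - ru * ru by ring.
  rewrite rvE ruE.
  have : 0 <= (v - u) * (v + u) by apply: mulr_ge0; lra.
  nra.
have diff_r' : (rv - ru) * ru <= (24 * s * ru) * ru.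
  have -> : (24 * s * ru) * ru = 24 * s * (ru * ru) by ring.
  rewrite ruE.
  have : 12 * s ^+ 2 <= 24 * s * u by rewrite expr2; nra.
  have : 24 * s * u <= 24 * s * (u * (4 - 3 * u)) by apply: ler_wpM2l => //; lra.
  lra.
have rv_le : rv - ru <= 24 * s * ru by rewrite -(ler_pM2r ru_gt0).
have v_le : v - u <= 6 * s * u.
  have : 3 * s ^+ 2 <= 6 * s * u by rewrite expr2; nra.
  lra.
rewrite /beta -/ru -/rv.
have : 0 <= s * u by apply: mulr_ge0; lra.
have : 0 <= s * ru by apply: mulr_ge0; lra.
nra.
Qed.

Section SmallP.
Variable p : R.
Hypothesis hp : 0 < p < 1 / 10.

Local Notation q := (qp p).
Local Notation sq := (Num.sqrt (qp p)).
Local Notation A := ((Aint p)%:~R : R).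

Lemma expR_Nqp : expR (- q) = 1 - p.
Proof. by case/andP: hp => p0 p1; rewrite /qp opprK lnK // posrE; lra. Qed.

Lemma qp_gt0 : 0 < q.
Proof. by case/andP: hp => p0 p1; rewrite /qp oppr_gt0 ln_lt0 //; apply/andP; split; lra. Qed.

Lemma qp_le : q <= 1 / 9.
Proof.
case/andP: hp => p0 p1.
have eq1 : expR q * (1 - p) = 1 by rewrite -expR_Nqp -expRD subrr expR0.
have le_10_9 : expR q <= 10 / 9 by have := expR_gt0 q; nra.
have := expR_ge1Dx (1 / 9 : R).
by rewrite -(ler_expR q); lra.
Qed.

Lemma sqrt_qp_gt0 : 0 < sq.
Proof. by rewrite sqrtr_gt0 qp_gt0. Qed.

Lemma sqrt_qpK : sq * sq = q.
Proof. by rewrite -expr2 sqr_sqrtr // ltW // qp_gt0. Qed.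

Lemma sqrt_qp_le : sq <= 1 / 3.
Proof. by have := qp_le; have := sqrt_qp_gt0; have := sqrt_qpK; nra. Qed.

Lemma Aint_sqrt_qp : 1 <= A * sq < 1 + sq.
Proof.
have sq0 := sqrt_qp_gt0.
have [A_gt A_ge] := andP (ceil_itv (1 / sq)).
move: A_ge A_gt; rewrite intrB ler_pdivrMr // ltr_pdivlMr // -/(Aint p) => A_ge A_gt.
by rewrite A_ge /=; lra.
Qed.

Lemma one_sub_expR_Aq : sq / 2 <= 1 - expR (- (A * q)) <= 1.
Proof.
have sq0 := sqrt_qp_gt0; have sq3 := sqrt_qp_le; have sqq := sqrt_qpK.
have [A1 A2] := andP Aint_sqrt_qp.
have zE : A * q = (A * sq) * sq by rewrite -mulrA sqq.
have z_ge : sq <= A * q by rewrite zE; nra.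
have z_le : A * q <= 1 / 2 by rewrite zE; nra.
have e_gt0 := expR_gt0 (- (A * q)).
have e_le : expR (- (A * q)) * (1 + A * q) <= 1.
  have := ler_wpM2l (ltW e_gt0) (expR_ge1Dx (A * q)).
  by rewrite -expRD addNr expR0.
by apply/andP; split; nra.
Qed.

Lemma gfun_Aq_bounds : 0 <= gfun (A * q) <= 2 * ln q^-1.
Proof.
have sq0 := sqrt_qp_gt0; have sq3 := sqrt_qp_le; have sqq := sqrt_qpK.
have [u_ge u_le] := andP one_sub_expR_Aq.
have [] := @beta_spec (1 - expR (- (A * q))); first by apply/andP; split; lra.
rewrite /gfun; set b := beta _ => b_ge b_le _.
have q2_le : q ^+ 2 <= b.
  suff : q ^+ 2 <= sq / 2 by lra.
  have -> : q ^+ 2 = (sq * sq) * (sq * sq) by rewrite sqq expr2.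
  have : sq * sq <= 1 / 9 by nra.
  have : 0 <= sq * sq by nra.
  nra.
have b_gt0 : 0 < b by apply: lt_le_trans q2_le; rewrite exprn_gt0 // qp_gt0.
have lnb_le0 : ln b <= 0 := ln_le0 b_le.
move: q2_le; rewrite -ler_ln ?posrE ?exprn_gt0 ?qp_gt0 // lnXn ?qp_gt0 // => lnb_ge.
rewrite lnV ?posrE ?qp_gt0 //; apply/andP; split; lra.
Qed.

Lemma ln_beta_row_le (m : nat) : A <= m%:R <= A + 3 ->
  ln (beta (1 - (1 - p) ^+ m)) <= - gfun (A * q) + 30 * sq.
Proof.
move=> /andP[A_le le_A3].
have sq0 := sqrt_qp_gt0; have sqq := sqrt_qpK.
have [u_ge u_le] := andP one_sub_expR_Aq.
set e := expR (- (A * q)) in u_ge u_le *.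
set d := (m%:R - A) * q.
have d_ge0 : 0 <= d by apply: mulr_ge0; [lra | exact: ltW qp_gt0].
have d_le : d <= 3 * sq ^+ 2.
  by rewrite expr2 sqq /d; apply: ler_wpM2r; [exact: ltW qp_gt0 | lra].
have rowE : 1 - (1 - p) ^+ m = 1 - e * expR (- d).
  by rewrite -expR_Nqp -expRM_natl -expRD /d; congr (1 - expR _); ring.
have ed_ge := expR_ge1Dx (- d).
have ed_le : expR (- d) <= 1 by rewrite expR_le1; lra.
have e_gt0 : 0 < e := expR_gt0 _.
have e_shift : e * expR (- d) <= e * 1 := ler_wpM2l (ltW e_gt0) ed_le.
have e_drop : e * (1 - expR (- d)) <= 1 * (1 - expR (- d)).
  by apply: ler_wpM2r; lra.
have [b_ge _ _] := @beta_spec (1 - e) ltac:(apply/andP; split; lra).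
have b_gt0 : 0 < beta (1 - e) by lra.
have ed_gt0 := expR_gt0 (- d).
have [bv_ge _ _] := @beta_spec (1 - e * expR (- d)) ltac:(apply/andP; split; nra).
have b_near : beta (1 - e * expR (- d)) <= beta (1 - e) * (1 + 30 * sq).
  apply: beta_le_near => //; try lra.
  nra.
rewrite rowE /gfun opprK -/e.
have ln_near : ln (1 + 30 * sq) <= 30 * sq by apply: le_ln1Dx; lra.
apply: le_trans (_ : ln (beta (1 - e) * (1 + 30 * sq)) <= _).
  rewrite ler_ln // posrE; first lra.
  by apply: mulr_gt0; lra.
by rewrite lnM ?posrE //; lra.
Qed.

Lemma beta_pow_le (m k : nat) : A <= m%:R <= A + 3 -> (0 < k)%N ->
  (k%:R : R) <= (Bint p)%:~R ->
  beta (1 - (1 - p) ^+ m) ^+ k.-1 <=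
  expR (- (m%:R - A) * gfun (A * q) - (k%:R - A) * gfun (A * q)
        + 40 * sq^-1 * ln q^-1).
Proof.
move=> /andP[A_le le_A3] k_gt0 k_le.
have sq0 := sqrt_qp_gt0; have sq3 := sqrt_qp_le; have sqq := sqrt_qpK.
have [A1 _] := andP Aint_sqrt_qp.
have [g_ge0 g_le] := andP gfun_Aq_bounds.
have ln_row := ln_beta_row_le (m := m) ltac:(by apply/andP).
set g := gfun (A * q) in g_ge0 g_le ln_row *.
set L := ln q^-1 in g_le *.
set bm := beta _ in ln_row *.
set s := sq in sq0 sq3 sqq A1 ln_row *.
have L_ge0 : 0 <= L by rewrite ln_ge0 // invf_ge1 ?qp_gt0 //; have := qp_le; lra.
have A3 : 3 <= A by nra.
have m_gt0 : (0 < m)%N by rewrite -(ltr0n R); lra.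
have row_lt1 : (1 - p) ^+ m < 1.
  by case/andP: hp => p0 p1; rewrite exprn_ilt1 -?lt0n //; lra.
have row_ge0 : 0 <= (1 - p) ^+ m.
  by case/andP: hp => p0 p1; rewrite exprn_ge0 //; lra.
have [bm_ge _ _] := @beta_spec (1 - (1 - p) ^+ m) ltac:(apply/andP; split; lra).
have bm_gt0 : 0 < bm by rewrite /bm; lra.
have k1E : (k.-1%:R : R) = k%:R - 1 by rewrite -[in RHS](prednK k_gt0) -natr1 addrK.
have ksq_le : k%:R * s <= s^-1 * L.
  have -> : s^-1 * L = q^-1 * L * s by rewrite -sqq; field; lra.
  by apply: ler_wpM2r; [lra | apply: le_trans k_le (floor_le _)].
have L_le : L <= s^-1 * L by rewrite ler_peMl // invf_ge1 //; lra.
have k_ge1 : 1 <= (k%:R : R) by rewrite ler1n.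
have ln_pow : (k%:R - 1) * ln bm <= (k%:R - 1) * (- g + 30 * s).
  by apply: ler_wpM2l; lra.
have Mg_le : 0 <= (2 + 2 * A - m%:R) * g by apply: mulr_ge0; lra.
rewrite -[bm ^+ _]lnK ?posrE ?exprn_gt0 // lnXn // -(mulr_natl (ln bm)) k1E ler_expR -!mulrA.
lra.
Qed.

End SmallP.

Lemma probG_le_expR (p : R) (w h : nat) : 0 < p < 1 / 10 ->
  Aint p <= Num.min w%:Z h%:Z <= Aint p + 3 -> (w + h)%:Z <= Bint p ->
  probG p w h <=
    expR (- (w%:R - (Aint p)%:~R) * gfun ((Aint p)%:~R * qp p)
          - (h%:R - (Aint p)%:~R) * gfun ((Aint p)%:~R * qp p)
          + 40 * (Num.sqrt (qp p))^-1 * ln (qp p)^-1).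
Proof.
move=> hp; wlog le_wh : w h / (w <= h)%N => [sym hA hB | hA hB].
  have [le_wh | /ltnW le_hw] := leqP w h; first exact: sym.
  rewrite minC in hA; rewrite addnC in hB.
  rewrite probGC (_ : forall x y z : R, - x * z - y * z = - y * z - x * z).
    exact: sym.
  by move=> x y z; ring.
rewrite (min_l (_ : w%:Z <= h%:Z)) // in hA; case/andP: hA => A_le le_A3.
have [A1 _] := andP (Aint_sqrt_qp hp).
set A : R := (Aint p)%:~R.
have A3 : 3 <= A by have := sqrt_qp_le hp; have := sqrt_qp_gt0 hp; nra.
have w_ge : A <= w%:R by rewrite /A -(ler_int R) in A_le.
have w_gt0 : (0 < w)%N by rewrite -(ltr0n R); lra.
have hp1 : 0 < p < 1 by case/andP: hp => p0 p1; apply/andP; split; lra.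
have h_gt0 : (0 < h)%N := leq_trans w_gt0 le_wh.
have h_le : (h%:R : R) <= (Bint p)%:~R.
  by rewrite -[h%:R]/((h%:Z)%:~R) ler_int; apply: le_trans hB; rewrite lez_nat leq_addl.
have w_in : A <= w%:R <= A + 3.
  by rewrite w_ge /=; move: le_A3; rewrite -(ler_int R) intrD.
apply: le_trans (@probG_le_beta p w h hp1 w_gt0 h_gt0) _.
exact: (@beta_pow_le p hp w h w_in h_gt0 h_le).
Qed.

End Bounds.

Lemma subrect_dim (r1 r2 : rect) x y : in_rect r1 x y -> subrect r1 r2 ->
  dima r1 <= dima r2 /\ dimb r1 <= dimb r2.
Proof.
move=> [/andP[x0 x1] /andP[y0 y1]] sub12.
have [/andP[? ?] /andP[? ?]] : in_rect r2 (rx0 r1) (ry0 r1).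
  by apply: sub12; split; apply/andP; split; lia.
have [/andP[? ?] /andP[? ?]] : in_rect r2 (rx1 r1) (ry1 r1).
  by apply: sub12; split; apply/andP; split; lia.
by rewrite /dima /dimb; split; lia.
Qed.

Lemma good_dim1_le (R : realType) (p : R) n Rs : good p n Rs ->
  dima (Rs 1%N) + dimb (Rs 1%N) <= Bint p.
Proof.
move=> [n_ge1 [in1 [sub [_ [dimn _]]]]].
suff chain i : (1 <= i <= n)%N -> in_rect (Rs i) 0 0 /\
    dima (Rs 1%N) + dimb (Rs 1%N) <= dima (Rs i) + dimb (Rs i).
  by apply: le_trans dimn; case: (chain n); rewrite ?n_ge1 ?leqnn.
elim: i => [// | i IH] /andP[_ le_in].
case: (posnP i) => [-> // | i_gt0].
have i_in : (1 <= i <= n)%N by rewrite i_gt0 ltnW.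
have [in_i le_i] := IH i_in.
have [le_a le_b] := subrect_dim in_i (sub i i_in).
by split; [exact: sub i i_in _ _ in_i | lia].
Qed.

Theorem lemma13 (R : realType) :
  exists C5 : R, forall p : R, 0 < p < 1 / 10 ->
  forall (n : nat) (Rs : nat -> rect), good p n Rs ->
  let q := qp p in
  let a0 : R := (Aint p)%:~R in
  let b0 : R := (Aint p)%:~R in
  let s0 : R := (dima (Rs 1%N))%:~R - a0 in
  let t0 : R := (dimb (Rs 1%N))%:~R - b0 in
  probG_rect p (Rs 1%N) <=
    expR (- s0 * gfun (b0 * q) - t0 * gfun (a0 * q)
          + C5 * (Num.sqrt q)^-1 * ln (q^-1)).
Proof.
exists 40 => p hp n Rs hgood /=.
have [_ [[/andP[x0 x1] /andP[y0 y1]] [_ [hmin _]]]] := hgood.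
have a_ge0 : 0 <= dima (Rs 1%N) by rewrite /dima; lia.
have b_ge0 : 0 <= dimb (Rs 1%N) by rewrite /dimb; lia.
move: hmin (good_dim1_le hgood) a_ge0 b_ge0; rewrite /probG_rect.
case: (dima _) => [w|//]; case: (dimb _) => [h|//] hmin dim_sum _ _.
exact: probG_le_expR.
Qed.
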